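(* Let $k$ be a field and $\mathsf{E}$ a locally finite $k$-linear category, and let $\mathsf{E}^\sim$ be its subcategory of short morphisms. Then the contramodule forgetful functor $\Theta_{\mathsf{E}^\sim}$ from left $\mathcal{C}_{\mathsf{E}^\sim}$-contramodules to left $\mathsf{E}^\sim$-modules is an equivalence of categories.
   Context: A small $k$-linear category $\mathsf{E}$ has $k$-vector spaces $\operatorname{Hom}_\mathsf{E}(x,y)$, $k$-bilinear associative composition and identities with $\mathrm{id}_x\ne0$. A left module is a $k$-linear functor to $k\text{-Vect}$. Write $x\preceq y$ if there are $n\ge1$ and objects $x=z_0,\dots,z_n=y$ with $\operatorname{Hom}_\mathsf{E}(z_{i-1},z_i)\neq0$ for all $i$; $x\sim y$ if $x\preceq y$ and $y\preceq x$. $\mathsf{E}$ is locally finite if all Hom spaces are finite-dimensional and every $\{z:x\preceq z\preceq y\}$ is finite. $\mathsf{E}^\sim$ has the same objects, $\operatorname{Hom}_{\mathsf{E}^\sim}(x,y)=\operatorname{Hom}_\mathsf{E}(x,y)$ if $x\sim y$ and $0$ otherwise, with the composition of $\mathsf{E}$; it is again a locally finite $k$-linear category. For a locally finite $k$-linear category $\mathsf{F}$: $\mathcal{C}_\mathsf{F}=\bigoplus_{x,y}\mathcal{C}^{x,y}$, $\mathcal{C}^{x,y}=\operatorname{Hom}_\mathsf{F}(x,y)^*$; counit zero on $\mathcal{C}^{x,y}$ for $x\ne y$, evaluation at $\mathrm{id}_x$ on $\mathcal{C}^{x,x}$; comultiplication $\mathcal{C}^{x,y}\to\bigoplus_z\mathcal{C}^{x,z}\otimes\mathcal{C}^{z,y}$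 dual to composition $g\otimes h\mapsto hg$. A left contramodule over a coalgebra $(\mathcal{C},\mu,\epsilon)$ is a space $\mathfrak{P}$ with $\pi:\operatorname{Hom}_k(\mathcal{C},\mathfrak{P})\to\mathfrak{P}$ such that $\pi(c\mapsto\epsilon(c)p)=p$ and, under $\operatorname{Hom}_k(\mathcal{C},\operatorname{Hom}_k(\mathcal{C},\mathfrak{P}))\cong\operatorname{Hom}_k(\mathcal{C}\otimes\mathcal{C},\mathfrak{P})$, $f\mapsto(c'\otimes c''\mapsto f(c'')(c'))$, $\pi(c\mapsto\pi(f(c)))=\pi(f\circ\mu)$; morphisms commute with $\pi$. Set $\varphi\cdot p=\pi(c\mapsto\varphi(c)p)$. The functor $\Theta_\mathsf{F}$: with $e_x$ evaluation at $\mathrm{id}_x$ on $\mathcal{C}^{x,x}$ (zero elsewhere) and $\mathrm{ev}_f$, for $f\in\operatorname{Hom}_\mathsf{F}(x,y)$, evaluation at $f$ on $\mathcal{C}^{x,y}$ (zero elsewhere), $\Theta_\mathsf{F}(\mathfrak{P})(x)=e_x\cdot\mathfrak{P}$, $f$ acting by $p\mapsto\mathrm{ev}_f\cdot p$, restriction on morphisms. *)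

From HB Require Import structures.
From mathcomp Require Import all_boot all_order all_algebra.
From Stdlib Require Import ClassicalEpsilon ProofIrrelevance FunctionalExtensionality.
From Stdlib Require List.

Set Implicit Arguments.
Unset Strict Implicit.
Unset Printing Implicit Defensive.

Import GRing.Theory.
Local Open Scope ring_scope.

(* [hcomp g h] is the composite "h g" of g : x -> y and h : y -> z.           *)
Record linCat (k : fieldType) := LinCat {
  obj : Type;
  hom : obj -> obj -> vectType k;
  hcomp : forall x y z, hom x y -> hom y z -> hom x z;
  idm : forall x, hom x x;
  comp_linl : forall x y z (h : hom y z), linear (fun g : hom x y => hcomp g h);
  comp_linr : forall x y z (g : hom x y), linear (fun h : hom y z => hcomp g h);
  compA : forall x y z w (f : hom x y) (g : hom y z) (h : hom z w),
    hcomp (hcomp f g) h = hcomp f (hcomp g h);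
  comp1f : forall x y (f : hom x y), hcomp (idm x) f = f;
  compf1 : forall x y (f : hom x y), hcomp f (idm y) = f;
  idm_neq0 : forall x, idm x != 0 }.

Arguments hcomp {k} l {x y z}.
Arguments idm {k} l x.
Arguments hom {k} l.

Section Defs.
Variable k : fieldType.

Section Cat.
Variable F : linCat k.

Definition homnz (x y : obj F) : Prop := exists f : hom F x y, f <> 0.

Inductive preceq : obj F -> obj F -> Prop :=
  | preceq1 x y : homnz x y -> preceq x y
  | preceqS x y z : homnz x y -> preceq y z -> preceq x z.

Definition simeq (x y : obj F) : Prop := preceq x y /\ preceq y x.

(* together with the finite-dimensionality of the Hom spaces (built into
   linCat via vectType), this is local finiteness *)
Definition locally_finite : Prop :=
  forall x y : obj F, exists s : list (obj F),
    forall z, preceq x z -> preceq z y -> List.In z s.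

Lemma preceq_trans x y z : preceq x y -> preceq y z -> preceq x z.
Proof.
elim=> [a b hab|a b c hab _ IH] hz; first exact: preceqS hab hz.
exact: preceqS hab (IH hz).
Qed.

Lemma simeq_trans x y z : simeq x y -> simeq y z -> simeq x z.
Proof. by case=> h1 h2 [h3 h4]; split; apply: preceq_trans; eassumption. Qed.

Lemma simeq_refl x : simeq x x.
Proof.
have h : preceq x x.
  by apply: preceq1; exists (idm F x); apply/eqP; exact: idm_neq0.
by split.
Qed.

Lemma linear_at0 (U V : lmodType k) (f : U -> V) : linear f -> f 0 = 0.
Proof.
move=> hf; have := hf (-1) 0 0.
by rewrite scaler0 addr0 scaleN1r addNr.
Qed.

End Cat.

Section Short.
Variable E : linCat k.

Definition short_homS (x y : obj E) : {vspace hom E x y} :=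
  if excluded_middle_informative (simeq x y) then fullv else 0%VS.

Definition short_hom (x y : obj E) : vectType k := subvs_of (short_homS x y).

Lemma short_homS_nsim x y : ~ simeq x y -> short_homS x y = 0%VS.
Proof. by move=> ns; rewrite /short_homS; case: excluded_middle_informative. Qed.

Lemma short_homS_sim x y : simeq x y -> short_homS x y = fullv.
Proof. by move=> s; rewrite /short_homS; case: excluded_middle_informative. Qed.

Lemma short_hom0 x y (u : short_hom x y) : ~ simeq x y -> vsval u = 0.
Proof.
move=> ns; suff h : forall v, v \in short_homS x y -> v = 0 by exact: h (subvsP u).
by move=> v; rewrite (short_homS_nsim ns) memv0 => /eqP.
Qed.

Lemma short_comp_mem x y z (u : short_hom x y) (v : short_hom y z) :
  hcomp E (vsval u) (vsval v) \in short_homS x z.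
Proof.
case: (classic (simeq x z)) => [sxz|nxz].
  by rewrite (short_homS_sim sxz) memvf.
case: (classic (simeq x y)) => sxy.
  case: (classic (simeq y z)) => syz; first by case: nxz; exact: simeq_trans syz.
  have h0 := linear_at0 (comp_linr (vsval u)).
  by rewrite (short_hom0 v syz) h0 mem0v.
have h0 := linear_at0 (comp_linl (vsval v)).
by rewrite (short_hom0 u sxy) h0 mem0v.
Qed.

Definition short_comp x y z (u : short_hom x y) (v : short_hom y z) :
  short_hom x z := Subvs (short_comp_mem u v).

Lemma short_idm_mem x : idm E x \in short_homS x x.
Proof. by rewrite (short_homS_sim (simeq_refl x)) memvf. Qed.

Definition short_idm x : short_hom x x := Subvs (short_idm_mem x).

Lemma short_valK x y (u v : short_hom x y) : vsval u = vsval v -> u = v.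
Proof. exact: val_inj. Qed.

Lemma short_comp_linl x y z (h : short_hom y z) :
  linear (fun g : short_hom x y => short_comp g h).
Proof.
move=> a g1 g2; apply: val_inj => /=.
by rewrite (comp_linl (vsval h)).
Qed.

Lemma short_comp_linr x y z (g : short_hom x y) :
  linear (fun h : short_hom y z => short_comp g h).
Proof.
move=> a g1 g2; apply: val_inj => /=.
by rewrite (comp_linr (vsval g)).
Qed.

Lemma short_compA x y z w (f : short_hom x y) (g : short_hom y z)
  (h : short_hom z w) :
  short_comp (short_comp f g) h = short_comp f (short_comp g h).
Proof. by apply: val_inj => /=; rewrite compA. Qed.

Lemma short_comp1f x y (f : short_hom x y) : short_comp (short_idm x) f = f.
Proof. by apply: val_inj => /=; rewrite comp1f. Qed.

Lemma short_compf1 x y (f : short_hom x y) : short_comp f (short_idm y) = f.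
Proof. by apply: val_inj => /=; rewrite compf1. Qed.

Lemma short_idm_neq0 x : short_idm x != 0.
Proof.
apply/eqP => h; have := congr1 (@vsval _ _ _) h => /=.
by move/eqP; apply/negP; exact: idm_neq0.
Qed.

Definition short : linCat k :=
  @LinCat k (obj E) short_hom short_comp short_idm short_comp_linl
    short_comp_linr short_compA short_comp1f short_compf1 short_idm_neq0.

End Short.

Section Contra.
Variable F : linCat k.

Definition Cxy (x y : obj F) : vectType k := 'Hom(hom F x y, k^o).

(* [at2 f a b] is f if (a,b) = (x,y) and 0 otherwise, for f : Hom_F(x,y);
   evaluating the summand C^{a,b} at [at2 f a b] for all (a,b) is the
   functional ev_f on C_F = (+)_{a,b} C^{a,b}.  In particular e_x is
   evaluation at [at2 (idm F x)], and the counit is evaluation at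
   [fun a b => at2 (idm F a) a b]. *)
Definition at2 (x y : obj F) (f : hom F x y) (a b : obj F) : hom F a b :=
  match excluded_middle_informative ((x, y) = (a, b)) with
  | left e => eq_rect (x, y) (fun p : obj F * obj F => hom F p.1 p.2) f (a, b) e
  | right _ => 0
  end.

(* Hom_k(C_F, P): a linear map out of the direct sum C_F = (+)_{a,b} C^{a,b}
   is the same as a family of linear maps C^{a,b} -> P. *)
Definition linfam (P : lmodType k) :=
  {f : forall a b : obj F, Cxy a b -> P | forall a b, linear (f a b)}.

Definition mkfam (P : lmodType k) (f : forall a b : obj F, Cxy a b -> P)
  (hf : forall a b, linear (f a b)) : linfam P :=
  exist (fun f : forall a b : obj F, Cxy a b -> P => forall a b, linear (f a b))
        f hf.

Lemma linfam_ext (P : lmodType k) (f g : linfam P) :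
  (forall a b c, sval f a b c = sval g a b c) -> f = g.
Proof.
move: f g => [f hf] [g hg] /= h.
have efg : f = g.
  apply: functional_extensionality_dep => a.
  apply: functional_extensionality_dep => b.
  apply: functional_extensionality => c; exact: h.
by subst g; rewrite (proof_irrelevance _ hf hg).
Qed.

Lemma lincomb_lin (P : lmodType k) (al : k) (f g : linfam P) a b :
  linear (fun c : Cxy a b => al *: sval f a b c + sval g a b c).
Proof.
move=> r c d; rewrite (svalP f a b) (svalP g a b).
by rewrite scalerDr !scalerDr !scalerA mulrC addrACA.
Qed.

Definition lincomb (P : lmodType k) (al : k) (f g : linfam P) : linfam P :=
  @mkfam P (fun a b (c : Cxy a b) => al *: sval f a b c + sval g a b c) (fun a b => @lincomb_lin P al f g a b).

(* the element  c |-> phi(c) p  of Hom_k(C_F, P), where phi in C_F^* is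
   evaluation of each summand C^{a,b} at the vector v a b of Hom_F(a,b) *)
Lemma ptfam_lin (P : lmodType k) (v : forall a b, hom F a b) (p : P) a b :
  linear (fun c : Cxy a b => (c (v a b) : k) *: p).
Proof.
by move=> r c d; rewrite add_lfunE scale_lfunE /= scalerDl scalerA.
Qed.

Definition ptfam (P : lmodType k) (v : forall a b, hom F a b) (p : P) :
  linfam P := @mkfam P (fun a b (c : Cxy a b) => (c (v a b) : k) *: p)
                      (fun a b => @ptfam_lin P v p a b).

Lemma mapfam_lin (P Q : lmodType k) (g : P -> Q) (hg : linear g)
  (f : linfam P) a b : linear (fun c : Cxy a b => g (sval f a b c)).
Proof. by move=> r c d; rewrite (svalP f a b) hg. Qed.

Definition mapfam (P Q : lmodType k) (g : P -> Q) (hg : linear g)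
  (f : linfam P) : linfam Q :=
  @mkfam Q (fun a b (c : Cxy a b) => g (sval f a b c)) (fun a b => @mapfam_lin P Q g hg f a b).

(* Hom_k(C_F, Hom_k(C_F, P)) ~= Hom_k(C_F (x) C_F, P), f |-> (c' (x) c'' |->
   f(c'')(c')): families of bilinear maps C^{a,b} x C^{x,y} -> P,
   B a b x y c' c'' = f(c'')(c') *)
Definition bifam (P : lmodType k) :=
  {B : forall a b x y : obj F, Cxy a b -> Cxy x y -> P |
     (forall a b x y (c : Cxy x y), linear (fun c' : Cxy a b => B a b x y c' c))
  /\ (forall a b x y (c' : Cxy a b), linear (B a b x y c'))}.

Definition bif_app (P : lmodType k) (B : bifam P) x y (c : Cxy x y) :
  linfam P :=
  @mkfam P (fun a b (c' : Cxy a b) => sval B a b x y c' c)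
          (fun a b => proj1 (svalP B) a b x y c).

Definition pi_linear (P : lmodType k) (pi : linfam P -> P) : Prop :=
  forall (al : k) (f g : linfam P), pi (lincomb al f g) = al *: pi f + pi g.

Lemma assoc_lhs_lin (P : lmodType k) (pi : linfam P -> P) (hpi : pi_linear pi)
  (B : bifam P) x y : linear (fun c : Cxy x y => pi (bif_app B c)).
Proof.
move=> r c d; rewrite -hpi; congr pi; apply: linfam_ext => a b c' /=.
exact: (proj2 (svalP B)).
Qed.

Definition assoc_lhs (P : lmodType k) (pi : linfam P -> P)
  (hpi : pi_linear pi) (B : bifam P) : linfam P :=
  @mkfam P (fun x y (c : Cxy x y) => pi (bif_app B c)) (fun x y => @assoc_lhs_lin P pi hpi B x y).

(* the comultiplication of C_F, written out: for c in C^{x,y},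
     mu(c) = sum_z sum_{i,j} c(h_j g_i) g_i^v (x) h_j^v  in
     (+)_z C^{x,z} (x) C^{z,y},
   where (g_i) is a basis of Hom_F(x,z) with dual basis (g_i^v) and (h_j) a
   basis of Hom_F(z,y) with dual basis (h_j^v); only the z with
   Hom_F(x,z) <> 0 and Hom_F(z,y) <> 0 contribute, and [zlist x y] lists
   them without repetition (such a list exists when F is locally finite). *)
Definition zlist (x y : obj F) : list (obj F) :=
  epsilon (inhabits nil) (fun s : list (obj F) =>
    List.NoDup s /\ forall z, List.In z s <-> (homnz x z /\ homnz z y)).

Definition bas (x y : obj F) (i : 'I_(\dim (fullv : {vspace hom F x y}))) :
  hom F x y := tnth (vbasis fullv) i.

Definition dualb (x y : obj F) (i : 'I_(\dim (fullv : {vspace hom F x y}))) :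
  Cxy x y := linfun (fun v : hom F x y => (coord (vbasis fullv) i v : k^o)).

Definition fmu (P : lmodType k) (B : bifam P) (x y : obj F) (c : Cxy x y) : P :=
  \sum_(z <- zlist x y)
    \sum_(i < \dim (fullv : {vspace hom F x z}))
      \sum_(j < \dim (fullv : {vspace hom F z y}))
        (c (hcomp F (bas i) (bas j)) : k) *: sval B x z z y (dualb i) (dualb j).

Lemma fmu_lin (P : lmodType k) (B : bifam P) x y : linear (@fmu P B x y).
Proof.
move=> r c d; rewrite /fmu scaler_sumr -big_split; apply: eq_bigr => z _.
rewrite scaler_sumr -big_split; apply: eq_bigr => i _.
rewrite scaler_sumr -big_split; apply: eq_bigr => j _.
by rewrite add_lfunE scale_lfunE /= scalerDl scalerA.
Qed.

Definition assoc_rhs (P : lmodType k) (B : bifam P) : linfam P :=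
  @mkfam P (@fmu P B) (fun x y => @fmu_lin P B x y).

Record contramod := Contra {
  cP :> lmodType k;
  cpi : linfam cP -> cP;
  cpi_lin : pi_linear cpi;
  cpi_counit : forall p : cP, cpi (ptfam (fun a b => at2 (idm F a) a b) p) = p;
  cpi_assoc : forall B : bifam cP, cpi (assoc_lhs cpi_lin B) = cpi (assoc_rhs B)
}.

Record contra_hom (P Q : contramod) := ContraHom {
  chf :> P -> Q;
  ch_lin : linear chf;
  ch_pi : forall f : linfam P, chf (cpi f) = cpi (mapfam ch_lin f)
}.

Definition dact (P : contramod) (v : forall a b, hom F a b) (p : P) : P :=
  cpi (ptfam v p).

Definition eact (P : contramod) (x : obj F) (p : P) : P := dact (at2 (idm F x)) p.

Definition evact (P : contramod) (x y : obj F) (f : hom F x y) (p : P) : P :=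
  dact (at2 f) p.

(* p lies in Theta_F(P)(x) = e_x . P *)
Definition inTheta (P : contramod) (x : obj F) (p : P) : Prop :=
  exists q : P, p = eact x q.

Record fmodule := FModule {
  mobj :> obj F -> lmodType k;
  mact : forall x y, hom F x y -> mobj x -> mobj y;
  mact_lin : forall x y (f : hom F x y), linear (mact f);
  mact_linf : forall x y (m : mobj x), linear (fun f : hom F x y => mact f m);
  mact_id : forall x (m : mobj x), mact (idm F x) m = m;
  mact_comp : forall x y z (g : hom F x y) (h : hom F y z) (m : mobj x),
    mact (hcomp F g h) m = mact h (mact g m)
}.

(* eta is (the family of restrictions to the e_x . P of) a morphism of
   F-modules Theta_F(P) -> Theta_F(Q): each eta x maps e_x . P linearly into
   e_x . Q, naturally in x (f acts on Theta_F(P) by p |-> ev_f . p). *)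
Definition Theta_hom (P Q : contramod) (eta : forall x : obj F, P -> Q) : Prop :=
  [/\ forall x (p : P), inTheta x p -> inTheta x (eta x p),
      forall x (al : k) (p1 p2 : P), inTheta x p1 -> inTheta x p2 ->
        eta x (al *: p1 + p2) = al *: eta x p1 + eta x p2
    & forall x y (f : hom F x y) (p : P), inTheta x p ->
        eta y (evact f p) = evact f (eta x p)].

(* phi is (the family of restrictions to the e_x . P of) an isomorphism of
   F-modules Theta_F(P) -> M *)
Definition Theta_iso (P : contramod) (M : fmodule) (phi : forall x : obj F, P -> M x)
  : Prop :=
  [/\ forall x (al : k) (p1 p2 : P), inTheta x p1 -> inTheta x p2 ->
        phi x (al *: p1 + p2) = al *: phi x p1 + phi x p2,
      forall x (p1 p2 : P), inTheta x p1 -> inTheta x p2 ->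
        phi x p1 = phi x p2 -> p1 = p2,
      forall x (m : M x), exists2 p : P, inTheta x p & phi x p = m
    & forall x y (f : hom F x y) (p : P), inTheta x p ->
        phi y (evact f p) = mact f (phi x p)].

(* Theta_F is an equivalence of categories: faithful, full, and essentially
   surjective *)
Definition Theta_equivalence : Prop :=
  [/\ (forall (P Q : contramod) (g1 g2 : contra_hom P Q),
         (forall x (p : P), inTheta x p -> g1 p = g2 p) -> forall p, g1 p = g2 p),
      (forall (P Q : contramod) (eta : forall x : obj F, P -> Q),
         Theta_hom eta ->
         exists g : contra_hom P Q, forall x (p : P), inTheta x p -> g p = eta x p)
    & (forall M : fmodule,
         exists (P : contramod) (phi : forall x : obj F, P -> M x), Theta_iso phi)].

End Contra.
End Defs.

(* The associativity axiom of a C_F-contramodule, applied to families of the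
   form c |-> c(v) *: p, shows that ev_h . (ev_u . p) = ev_(h u) . p, and that
   this vanishes when u and h are not composable. Hence the e_x are orthogonal
   idempotents, and the counit axiom becomes p = pi(c |-> c(id_x) e_x . p):
   every p is the contramodule sum of its components e_x . p. So a morphism of
   contramodules is determined by its restrictions to the e_x . P, and a
   morphism eta of modules extends by p |-> pi(c |-> c(id_x) eta_x(e_x . p)).
   In E^~ only the finitely many objects of the ~-class of x have nonzero
   morphisms to x, so pi of a family concentrated at the target x is a finite
   sum of terms ev_f . p; this makes the extension a contramodule morphism.
   Conversely, a module M is Theta of the product of the M(x) with
   pi(f)_y = sum_(a ~ y) sum_i b_i . f(b_i^* )_a, (b_i) a basis of Hom(a, y),
   whose axioms are finite computations inside the ~-classes. *)

From HB Require Import structures.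
From mathcomp Require Import all_boot all_order all_algebra.
From mathcomp Require Import boolp.
From Stdlib Require Import ClassicalEpsilon ProofIrrelevance FunctionalExtensionality.
From Stdlib Require Import PropExtensionality Classical.
From Stdlib Require List.

Set Implicit Arguments.
Unset Strict Implicit.
Unset Printing Implicit Defensive.

Import GRing.Theory.
Local Open Scope ring_scope.

Notation dimh F x y := (\dim (fullv : {vspace hom F x y})).

Section LinearMaps.
Variable k : fieldType.
Implicit Types U V : lmodType k.

Lemma lin_add U V (f : U -> V) : linear f -> {morph f : u v / u + v}.
Proof. by move=> hf u v; have := hf 1 u v; rewrite !scale1r. Qed.

Lemma lin_scale U V (f : U -> V) (a : k) : linear f -> {morph f : u / a *: u}.
Proof. by move=> hf u; have := hf a u 0; rewrite !addr0 (linear_at0 hf) addr0. Qed.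

Lemma lin_sum U V (f : U -> V) (I : Type) (r : seq I) (P : pred I) (G : I -> U) :
  linear f -> f (\sum_(i <- r | P i) G i) = \sum_(i <- r | P i) f (G i).
Proof.
move=> hf; elim: r => [|a r IH]; first by rewrite !big_nil (linear_at0 hf).
by rewrite !big_cons; case: (P a); rewrite ?(lin_add hf) IH.
Qed.

End LinearMaps.

Section Lists.
Variable T : Type.

Lemma NoDup_enum_of_incl (Q : T -> Prop) (s : list T) :
  (forall z, Q z -> List.In z s) ->
  exists l, List.NoDup l /\ forall z, List.In z l <-> Q z.
Proof.
move=> hs; pose dec (a b : T) := excluded_middle_informative (a = b).
pose qb z := if excluded_middle_informative (Q z) then true else false.
exists (List.nodup dec (List.filter qb s)); split; first exact: List.NoDup_nodup.
move=> z; rewrite List.nodup_In List.filter_In /qb.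
case: excluded_middle_informative => hz; split=> [[]|] //.
by move=> /hs.
Qed.

Variable V : zmodType.
Implicit Types (l : list T) (S : T -> V).

Lemma eq_big_In l S1 S2 :
  (forall z, List.In z l -> S1 z = S2 z) -> \sum_(z <- l) S1 z = \sum_(z <- l) S2 z.
Proof.
elim: l => [|a l IH] h; first by rewrite !big_nil.
by rewrite !big_cons h /= ?IH // => [z hz|]; [apply: h; right | left].
Qed.

Lemma big_In0 l S : (forall z, List.In z l -> S z = 0) -> \sum_(z <- l) S z = 0.
Proof. by move=> /eq_big_In ->; rewrite big1. Qed.

Lemma big_NoDup1 l S z0 : List.NoDup l ->
  (forall z, z <> z0 -> S z = 0) -> (~ List.In z0 l -> S z0 = 0) ->
  \sum_(z <- l) S z = S z0.
Proof.
elim: l => [|a l IH] nd h1 h2; first by rewrite big_nil h2.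
move/List.NoDup_cons_iff: nd => [nal ndl]; rewrite big_cons.
case: (classic (a = z0)) => [e|ne].
  subst z0; rewrite big_In0 ?addr0 // => z hz.
  by apply: h1 => e; subst z; exact: nal hz.
by rewrite h1 // add0r IH // => nin; apply: h2 => -[e|//]; exact: ne e.
Qed.

Lemma big_NoDup_incl l1 l2 S :
  List.NoDup l1 -> List.NoDup l2 -> List.incl l1 l2 ->
  (forall z, List.In z l2 -> ~ List.In z l1 -> S z = 0) ->
  \sum_(z <- l1) S z = \sum_(z <- l2) S z.
Proof.
move=> nd1 nd2 sub12 h0.
pose D a b := if excluded_middle_informative (a = b) then S b else 0.
have D_diag a : D a a = S a by rewrite /D; case: excluded_middle_informative.
have D_off a b : a <> b -> D a b = 0.
  by rewrite /D; case: excluded_middle_informative.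
have -> : \sum_(a <- l1) S a = \sum_(a <- l1) \sum_(b <- l2) D a b.
  apply: eq_big_In => a ha; rewrite (@big_NoDup1 _ _ a) //.
  - by move=> b /nesym; exact: D_off.
  - by move=> nin; case: nin; apply: sub12.
rewrite exchange_big /=; apply: eq_big_In => b hb.
rewrite (@big_NoDup1 _ _ b) //.
- by move=> a ne; exact: D_off ne.
- by rewrite D_diag; exact: h0.
Qed.
End Lists.

Section LinCatFacts.
Variables (k : fieldType) (F : linCat k).

Lemma comp0f x y z (h : hom F y z) : hcomp F (0 : hom F x y) h = 0.
Proof. exact: linear_at0 (comp_linl h). Qed.

Lemma compf0 x y z (g : hom F x y) : hcomp F g (0 : hom F y z) = 0.
Proof. exact: linear_at0 (comp_linr g). Qed.

Lemma not_homnz_eq0 x y : ~ homnz x y -> forall f : hom F x y, f = 0.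
Proof. by move=> h f; apply: NNPP => nf; apply: h; exists f. Qed.

Lemma at2E x y (f : hom F x y) : at2 f x y = f.
Proof.
rewrite /at2; case: excluded_middle_informative => // e.
by rewrite (proof_irrelevance _ e erefl).
Qed.

Lemma at2_eq0 x y (f : hom F x y) a b : (x, y) <> (a, b) -> at2 f a b = 0.
Proof. by rewrite /at2; case: excluded_middle_informative. Qed.

Lemma at2_eq0l x y (f : hom F x y) a b : x <> a -> at2 f a b = 0.
Proof. by move=> nxa; apply: at2_eq0 => -[/nxa]. Qed.

Lemma at2_eq0r x y (f : hom F x y) a b : y <> b -> at2 f a b = 0.
Proof. by move=> nyb; apply: at2_eq0 => -[_ /nyb]. Qed.

Lemma hom_expand x y (v : hom F x y) :
  v = \sum_(i < dimh F x y) (dualb i v : k) *: bas i.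
Proof.
rewrite {1}(coord_vbasis (memvf v)); apply: eq_bigr => i _.
by rewrite /dualb lfunE /bas (tnth_nth 0).
Qed.

Lemma dual_expand x y (c : Cxy x y) :
  c = \sum_(i < dimh F x y) (c (bas i) : k) *: dualb i.
Proof.
apply/lfunP => v; rewrite sum_lfunE {1}(hom_expand v) linear_sum.
apply: eq_bigr => i _; rewrite scale_lfunE linearZ /=.
by rewrite /GRing.scale /= mulrC.
Qed.

Lemma sum_dual_compl (P : lmodType k) x y z (c : Cxy x y) (w : hom F x z)
    (v : hom F z y) (q : P) :
  \sum_(i < dimh F x z) (c (hcomp F (bas i) v) : k) *: ((dualb i w : k) *: q) =
  (c (hcomp F w v) : k) *: q.
Proof.
under eq_bigr do rewrite scalerA.
rewrite -scaler_suml; congr (_ *: _).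
rewrite {2}(hom_expand w) (lin_sum _ _ _ (comp_linl v)) linear_sum /=.
by apply: eq_bigr => j _; rewrite (lin_scale _ (comp_linl v)) linearZ /= mulrC.
Qed.

Lemma comp_at2_eq0 a m m' b x y z (u : hom F a m) (h : hom F m' b) (c : Cxy x y) :
  m <> m' -> c (hcomp F (at2 u x z) (at2 h z y)) = 0.
Proof.
move=> nm; case: (classic (z = m)) => [->|nz].
  by rewrite (at2_eq0l h _ (nesym nm)) compf0 linear0.
by rewrite (at2_eq0r u _ (nesym nz)) comp0f linear0.
Qed.

End LinCatFacts.

Section ContramoduleCalculus.
Variables (k : fieldType) (F : linCat k) (P : contramod F).

Lemma cpi_ext (f g : linfam F P) :
  (forall a b c, sval f a b c = sval g a b c) -> cpi f = cpi g.
Proof. by move=> /linfam_ext ->. Qed.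

Lemma cpi_lincomb (al : k) (f g h : linfam F P) :
  (forall a b c, sval f a b c = al *: sval g a b c + sval h a b c) ->
  cpi f = al *: cpi g + cpi h.
Proof. by move=> e; rewrite -cpi_lin; apply: cpi_ext. Qed.

Lemma cpi_eq0 (f : linfam F P) : (forall a b c, sval f a b c = 0) -> cpi f = 0.
Proof.
move=> f0; have := @cpi_lincomb (-1) f f f.
by rewrite scaleN1r addNr; apply=> a b c; rewrite f0 scaler0 addr0.
Qed.

Lemma cpi_scale (al : k) (f g : linfam F P) :
  (forall a b c, sval f a b c = al *: sval g a b c) -> cpi f = al *: cpi g.
Proof.
move=> e; pose g0 := lincomb (-1) g g.
have g0E a b c : sval g0 a b c = 0 by rewrite /= scaleN1r addNr.
rewrite -[RHS]addr0 -(cpi_eq0 g0E); apply: cpi_lincomb => a b c.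
by rewrite g0E addr0.
Qed.

Lemma sumfam_lin (I : Type) (r : seq I) (G : I -> linfam F P) (a b : obj F) :
  linear (fun c : Cxy a b => \sum_(i <- r) sval (G i) a b c).
Proof.
move=> al c d; rewrite scaler_sumr -big_split; apply: eq_bigr => i _.
exact: (svalP (G i) a b).
Qed.

Lemma cpi_sum (I : Type) (r : seq I) (G : I -> linfam F P) (f : linfam F P) :
  (forall a b c, sval f a b c = \sum_(i <- r) sval (G i) a b c) ->
  cpi f = \sum_(i <- r) cpi (G i).
Proof.
elim: r f => [|i r IH] f e.
  by rewrite big_nil; apply: cpi_eq0 => a b c; rewrite e big_nil.
rewrite big_cons -(IH (mkfam (sumfam_lin r G))) // -[cpi (G i)]scale1r.
by apply: cpi_lincomb => a b c; rewrite e big_cons scale1r.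
Qed.

Lemma dact_linear (v : forall a b, hom F a b) : linear (@dact _ _ P v).
Proof.
by move=> al p q; apply: cpi_lincomb => a b c /=; rewrite scalerDr !scalerA mulrC.
Qed.

Lemma comulfam_lin (v : forall a b, hom F a b) (fx : obj F -> linfam F P) x y :
  linear (fun c : Cxy x y => \sum_(z <- zlist x y) \sum_(i < dimh F x z)
     (c (hcomp F (bas i) (v z y)) : k) *: sval (fx z) x z (dualb i)).
Proof.
move=> r c d; rewrite scaler_sumr -big_split; apply: eq_bigr => z _.
rewrite scaler_sumr -big_split; apply: eq_bigr => i _.
by rewrite add_lfunE scale_lfunE /= scalerDl scalerA.
Qed.

Definition comulfam (v : forall a b, hom F a b) (fx : obj F -> linfam F P) :
  linfam F P := mkfam (@comulfam_lin v fx).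

(* Associativity applied to [B c' c := c (v x y) *: sval (fx x) a b c'], for
   c' in C^{a,b} and c in C^{x,y}; the sum over j in mu(c) collapses because
   the dual basis of Hom(z, y) is evaluated at v z y. *)
Lemma cpi_assoc_pt (v : forall a b, hom F a b) (fx : obj F -> linfam F P)
    (f : linfam F P) :
  (forall x y c, sval f x y c = (c (v x y) : k) *: cpi (fx x)) ->
  cpi f = cpi (comulfam v fx).
Proof.
move=> fE.
have linl a b x y (c : Cxy x y) :
    linear (fun c' : Cxy a b => (c (v x y) : k) *: sval (fx x) a b c').
  by move=> r c1 c2; rewrite (svalP (fx x) a b) scalerDr !scalerA mulrC.
have linr a b x y (c' : Cxy a b) :
    linear (fun c : Cxy x y => (c (v x y) : k) *: sval (fx x) a b c').
  by move=> r c1 c2; rewrite add_lfunE scale_lfunE /= scalerDl scalerA.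
pose B : bifam F P := exist _ _ (conj linl linr).
have := cpi_assoc B.
have -> : cpi (assoc_lhs (@cpi_lin _ _ P) B) = cpi f.
  by apply: cpi_ext => x y c /=; rewrite fE; apply: cpi_scale.
move=> ->; apply: cpi_ext => x y c /=; rewrite /fmu; apply: eq_bigr => z _.
apply: eq_bigr => i _ /=.
under eq_bigr do rewrite scalerA.
rewrite -scaler_suml; congr (_ *: _).
rewrite {2}(hom_expand (v z y)) (lin_sum _ _ _ (comp_linr (bas i))) linear_sum /=.
by apply: eq_bigr => j _; rewrite (lin_scale _ (comp_linr (bas i))) linearZ /= mulrC.
Qed.

End ContramoduleCalculus.

Lemma comulfam_map (k : fieldType) (F : linCat k) (P Q : contramod F) (g : P -> Q)
    (hg : linear g) v (fx : obj F -> linfam F P) a y c :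
  sval (comulfam v (fun z => mapfam hg (fx z))) a y c = g (sval (comulfam v fx) a y c).
Proof.
rewrite /= (lin_sum _ _ _ hg); apply: eq_bigr => z _.
rewrite (lin_sum _ _ _ hg); apply: eq_bigr => i _.
by rewrite (lin_scale _ hg).
Qed.

(* [cls y] enumerates the block of [y]. For [short E] the blocks are the
   ~-classes, which are finite by local finiteness; this is what makes every
   sum over objects below finite. *)
Record finite_blocks (k : fieldType) (F : linCat k) (cls : obj F -> list (obj F))
  : Prop := FiniteBlocks {
  cls_NoDup : forall y, List.NoDup (cls y);
  cls_self : forall y, List.In y (cls y);
  cls_homnz : forall a y : obj F, homnz a y -> List.In a (cls y);
  cls_eq : forall y z, List.In z (cls y) -> cls z = cls y }.

Section BlockCalculus.
Variables (k : fieldType) (F : linCat k) (cls : obj F -> list (obj F)).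
Hypothesis hcls : finite_blocks cls.

Lemma not_homnz_cls (a y : obj F) : ~ List.In a (cls y) -> ~ homnz a y.
Proof. by move=> nin hay; apply: nin; exact: cls_homnz hay. Qed.

Lemma zlist_spec (x y : obj F) : List.NoDup (zlist x y) /\
  forall z, List.In z (zlist x y) <-> homnz x z /\ homnz z y.
Proof.
apply: (epsilon_spec (inhabits nil) (fun s => List.NoDup s /\ _)).
by apply: (NoDup_enum_of_incl (s := cls y)) => z [_ /(cls_homnz hcls)].
Qed.

Lemma zlist_sum1 (V : zmodType) (x y : obj F) (S : obj F -> V) z0 :
  (forall z, z <> z0 -> S z = 0) -> (~ (homnz x z0 /\ homnz z0 y) -> S z0 = 0) ->
  \sum_(z <- zlist x y) S z = S z0.
Proof.
move=> S0 Sz0; have [nd zE] := zlist_spec x y.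
by apply: big_NoDup1 => // nin; apply: Sz0 => /zE.
Qed.

Lemma zlist_sum_comp_at2 a m b x y (u : hom F a m) (h : hom F m b) (c : Cxy x y) :
  \sum_(z <- zlist x y) (c (hcomp F (at2 u x z) (at2 h z y)) : k) =
  c (at2 (hcomp F u h) x y).
Proof.
rewrite (@zlist_sum1 _ x y _ m).
- case: (classic (x = a)) => [ex|/nesym nx]; last first.
    by rewrite (at2_eq0l u _ nx) (at2_eq0l (hcomp F u h) _ nx) comp0f.
  subst x; rewrite at2E; case: (classic (y = b)) => [ey|/nesym ny]; last first.
    by rewrite (at2_eq0r h _ ny) (at2_eq0r (hcomp F u h) _ ny) compf0.
  by subst y; rewrite !at2E.
- by move=> z /nesym nz; rewrite (at2_eq0l h _ nz) compf0 linear0.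
- move=> nn; case: (classic (homnz x m)) => hxm.
    have hmy : ~ homnz m y by move=> hmy; apply: nn.
    by rewrite (not_homnz_eq0 hmy (at2 h m y)) compf0 linear0.
  by rewrite (not_homnz_eq0 hxm (at2 u x m)) comp0f linear0.
Qed.

Section Contramodule.
Variable P : contramod F.

Lemma evact_comp a m b (u : hom F a m) (h : hom F m b) (q : P) :
  evact h (evact u q) = evact (hcomp F u h) q.
Proof.
rewrite [LHS](@cpi_assoc_pt _ _ P (at2 h) (fun _ => ptfam (at2 u) q)) //.
apply: cpi_ext => x y c /=.
under eq_bigr do rewrite sum_dual_compl.
by rewrite -scaler_suml zlist_sum_comp_at2.
Qed.

Lemma evact_comp_eq0 a m m' b (u : hom F a m) (h : hom F m' b) (q : P) :
  m <> m' -> evact h (evact u q) = 0.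
Proof.
move=> nm; rewrite [LHS](@cpi_assoc_pt _ _ P (at2 h) (fun _ => ptfam (at2 u) q)) //.
apply: cpi_eq0 => x y c /=; apply: big1 => z _.
by rewrite sum_dual_compl comp_at2_eq0 ?scale0r.
Qed.

Lemma eactE x (q : P) : eact x q = evact (idm F x) q.
Proof. by []. Qed.

Lemma eact_idem x (q : P) : eact x (eact x q) = eact x q.
Proof. by rewrite !eactE evact_comp comp1f. Qed.

Lemma inThetaP x (p : P) : inTheta x p <-> eact x p = p.
Proof. by split=> [[q ->]|<-]; [rewrite eact_idem | exists p]. Qed.

Lemma inTheta_eact x (p : P) : inTheta x (eact x p).
Proof. by exists p. Qed.

Lemma inTheta_evact a x (h : hom F a x) (p : P) : inTheta x (evact h p).
Proof. by apply/inThetaP; rewrite eactE evact_comp compf1. Qed.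

Lemma evact_eact a x (h : hom F a x) (p : P) : evact h (eact a p) = evact h p.
Proof. by rewrite eactE evact_comp comp1f. Qed.

Lemma eact_linear x : linear (@eact _ _ P x).
Proof. exact: dact_linear. Qed.

Lemma inTheta_lincomb x (al : k) (p q : P) :
  inTheta x p -> inTheta x q -> inTheta x (al *: p + q).
Proof.
by move=> /inThetaP hp /inThetaP hq; apply/inThetaP; rewrite eact_linear hp hq.
Qed.

Lemma inTheta0 x : inTheta x (0 : P).
Proof. by apply/inThetaP; exact: linear_at0 (eact_linear x). Qed.

Lemma inTheta_sum x (I : Type) (r : seq I) (G : I -> P) :
  (forall i, inTheta x (G i)) -> inTheta x (\sum_(i <- r) G i).
Proof.
move=> h; elim: r => [|i r IH]; first by rewrite big_nil; exact: inTheta0.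
by rewrite big_cons -[G i]scale1r; apply: inTheta_lincomb.
Qed.

Lemma diagfam_lin (t : obj F -> P) x y :
  linear (fun c : Cxy x y => (c (at2 (idm F x) x y) : k) *: t x).
Proof. by move=> r c d; rewrite add_lfunE scale_lfunE /= scalerDl scalerA. Qed.

Definition diagfam (t : obj F -> P) : linfam F P := mkfam (diagfam_lin t).

(* The counit axiom, rewritten through associativity. *)
Lemma cpi_diag_eact (p : P) : cpi (diagfam (fun x => eact x p)) = p.
Proof.
rewrite -[RHS](cpi_counit (c:=P)).
rewrite (@cpi_assoc_pt _ _ P (fun x y => at2 (idm F x) x y)
                              (fun x => ptfam (at2 (idm F x)) p)) //.
apply: cpi_ext => x y c /=.
under eq_bigr do rewrite sum_dual_compl.
rewrite -scaler_suml (@zlist_sum1 _ x y _ x).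
- by rewrite at2E comp1f.
- by move=> z nz; rewrite (at2_eq0l (idm F z) _ nz) comp0f linear0.
- move=> nn; have hxy : ~ homnz x y.
    by move=> hxy; apply: nn; split=> //; exists (idm F x); apply/eqP/idm_neq0.
  by rewrite (not_homnz_eq0 hxy (at2 _ x y)) compf0 linear0.
Qed.

Lemma eact_diag (t : obj F -> P) y : eact y (cpi (diagfam t)) = eact y (t y).
Proof.
rewrite [LHS](@cpi_assoc_pt _ _ P (at2 (idm F y)) (fun _ => diagfam t)) //.
apply: cpi_ext => a b c /=.
under eq_bigr do rewrite sum_dual_compl.
case: (classic (a = y)) => [ea|na].
  by subst a; rewrite -scaler_suml zlist_sum_comp_at2 comp1f.
rewrite (at2_eq0l (idm F y) _ (nesym na)) linear0 scale0r.
by rewrite big1 // => z _; rewrite comp_at2_eq0 ?scale0r.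
Qed.

Lemma comulfam_at2_eq0 a x (h : hom F a x) (fx : obj F -> linfam F P) b y c :
  y <> x -> sval (comulfam (at2 h) fx) b y c = 0.
Proof.
move=> /nesym ny /=; apply: big1 => z _; apply: big1 => i _.
by rewrite (at2_eq0r h _ ny) compf0 linear0 scale0r.
Qed.

Lemma cpi_col_expand x (f : linfam F P) :
  (forall a y c, y <> x -> sval f a y c = 0) ->
  cpi f = \sum_(a <- cls x) \sum_(i < dimh F a x)
            evact (bas i) (sval f a x (dualb i)).
Proof.
move=> fcol.
pose G a := mkfam (sumfam_lin (index_enum 'I_(dimh F a x))
     (fun i => ptfam (at2 (bas i)) (sval f a x (dualb i)))).
rewrite (@cpi_sum _ _ P _ (cls x) G f) => [|a' y c /=].
  by apply: eq_bigr => a _; exact: cpi_sum.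
case: (classic (y = x)) => [ey|ny]; last first.
  rewrite fcol // big1 // => a _; rewrite big1 // => i _.
  by rewrite (at2_eq0r (bas i) _ (nesym ny)) linear0 scale0r.
subst y; rewrite (big_NoDup1 (z0 := a') (cls_NoDup hcls x)).
- under eq_bigr do rewrite at2E.
  rewrite {1}(dual_expand c) (lin_sum _ _ _ (svalP f a' x)).
  by apply: eq_bigr => i _; rewrite (lin_scale _ (svalP f a' x)).
- move=> a na; rewrite big1 // => i _.
  by rewrite (at2_eq0l (bas i) _ na) linear0 scale0r.
- move=> /not_homnz_cls hn; rewrite big1 // => i _.
  by rewrite (not_homnz_eq0 hn (bas i)) ?at2E ?linear0 ?scale0r.
Qed.

Lemma eact_cpi_expand x (f : linfam F P) :
  eact x (cpi f) = \sum_(a <- cls x) \sum_(i < dimh F a x)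
     evact (bas i) (sval (comulfam (at2 (idm F x)) (fun _ => f)) a x (dualb i)).
Proof.
rewrite [LHS](@cpi_assoc_pt _ _ P (at2 (idm F x)) (fun _ => f)) //.
by apply: cpi_col_expand => a y c; exact: comulfam_at2_eq0.
Qed.

End Contramodule.

Lemma Theta_faithful (P Q : contramod F) (g1 g2 : contra_hom P Q) :
  (forall x (p : P), inTheta x p -> g1 p = g2 p) -> forall p, g1 p = g2 p.
Proof.
move=> h p; rewrite -(cpi_diag_eact p) !ch_pi; apply: cpi_ext => x y c /=.
by rewrite !(lin_scale _ (ch_lin _)) (h x _ (inTheta_eact x p)).
Qed.

Section Full.
Variables (P Q : contramod F) (eta : forall x : obj F, P -> Q).
Hypothesis eta_in : forall x (p : P), inTheta x p -> inTheta x (eta x p).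
Hypothesis eta_lin : forall x (al : k) (p1 p2 : P), inTheta x p1 -> inTheta x p2 ->
  eta x (al *: p1 + p2) = al *: eta x p1 + eta x p2.
Hypothesis eta_nat : forall x y (f : hom F x y) (p : P), inTheta x p ->
  eta y (evact f p) = evact f (eta x p).

Lemma eta0 x : eta x 0 = 0.
Proof.
have := eta_lin (-1) (inTheta0 P x) (inTheta0 P x).
by rewrite scaler0 addr0 scaleN1r addNr.
Qed.

Lemma eta_sum x (I : Type) (r : seq I) (G : I -> P) :
  (forall i, inTheta x (G i)) -> eta x (\sum_(i <- r) G i) = \sum_(i <- r) eta x (G i).
Proof.
move=> h; elim: r => [|i r IH]; first by rewrite !big_nil eta0.
by rewrite !big_cons -[G i]scale1r eta_lin ?scale1r ?IH //; exact: inTheta_sum.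
Qed.

Definition eta_ext (p : P) : Q := cpi (diagfam (fun x => eta x (eact x p))).

Lemma eta_ext_lin : linear eta_ext.
Proof.
move=> al p q; apply: cpi_lincomb => a b c /=.
rewrite eact_linear eta_lin; [|exact: inTheta_eact..].
by rewrite scalerDr !scalerA mulrC.
Qed.

Lemma eta_extE x (p : P) : inTheta x p -> eta_ext p = eta x p.
Proof.
move=> hp; have /inThetaP pE := hp; have /inThetaP <- := eta_in hp.
apply: cpi_ext => a b c /=.
case: (classic (a = x)) => [ea|na]; first by subst a; rewrite pE.
have -> : eact a p = 0 by rewrite -pE !eactE evact_comp_eq0 //; exact: nesym.
by rewrite eta0 scaler0 (at2_eq0l (idm F x) _ (nesym na)) linear0 scale0r.
Qed.

Lemma eact_eta_ext a (p : P) : eact a (eta_ext p) = eta a (eact a p).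
Proof. by rewrite eact_diag; apply/inThetaP/eta_in/inTheta_eact. Qed.

Lemma eta_ext_cpi (f : linfam F P) : eta_ext (cpi f) = cpi (mapfam eta_ext_lin f).
Proof.
rewrite -[RHS]cpi_diag_eact; apply: cpi_ext => x y c /=; congr (_ *: _).
rewrite !eact_cpi_expand eta_sum; last first.
  by move=> a; apply/inTheta_sum => i; exact: inTheta_evact.
apply: eq_bigr => a _; rewrite eta_sum; last by move=> i; exact: inTheta_evact.
apply: eq_bigr => i _.
rewrite comulfam_map -evact_eact eta_nat; last exact: inTheta_eact.
by rewrite -eact_eta_ext evact_eact.
Qed.

Definition eta_ext_hom : contra_hom P Q := ContraHom eta_ext_cpi.

End Full.

End BlockCalculus.

Section DependentProduct.
Variables (k : fieldType) (T : Type) (M : T -> lmodType k).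

Definition dprod := forall x, M x.

HB.instance Definition _ := Choice.on dprod.

Definition dprod_add (p q : dprod) : dprod := fun x => p x + q x.
Definition dprod_opp (p : dprod) : dprod := fun x => - p x.
Definition dprod_scale (a : k) (p : dprod) : dprod := fun x => a *: p x.

Lemma dprod_addA : associative dprod_add.
Proof. by move=> p q r; apply: functional_extensionality_dep => x; apply: addrA. Qed.

Lemma dprod_addC : commutative dprod_add.
Proof. by move=> p q; apply: functional_extensionality_dep => x; apply: addrC. Qed.

Lemma dprod_add0 : left_id (fun _ => 0) dprod_add.
Proof. by move=> p; apply: functional_extensionality_dep => x; apply: add0r. Qed.

Lemma dprod_addN : left_inverse (fun _ => 0) dprod_opp dprod_add.
Proof. by move=> p; apply: functional_extensionality_dep => x; apply: addNr. Qed.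

HB.instance Definition _ :=
  GRing.isZmodule.Build dprod dprod_addA dprod_addC dprod_add0 dprod_addN.

Lemma dprod_scaleA a b p : dprod_scale a (dprod_scale b p) = dprod_scale (a * b) p.
Proof. by apply: functional_extensionality_dep => x; apply: scalerA. Qed.

Lemma dprod_scale1 : left_id 1 dprod_scale.
Proof. by move=> p; apply: functional_extensionality_dep => x; apply: scale1r. Qed.

Lemma dprod_scaleDr : right_distributive dprod_scale +%R.
Proof. by move=> a p q; apply: functional_extensionality_dep => x; apply: scalerDr. Qed.

Lemma dprod_scaleDl p : {morph dprod_scale^~ p : a b / a + b}.
Proof. by move=> a b; apply: functional_extensionality_dep => x; apply: scalerDl. Qed.

HB.instance Definition _ := GRing.Zmodule_isLmodule.Build k dprod
  dprod_scaleA dprod_scale1 dprod_scaleDr dprod_scaleDl.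

Lemma dprodD (p q : dprod) x : (p + q) x = p x + q x. Proof. by []. Qed.

Lemma dprodZ (a : k) (p : dprod) x : (a *: p) x = a *: p x. Proof. by []. Qed.

Lemma dprod_sum (I : Type) (r : seq I) (G : I -> dprod) x :
  (\sum_(i <- r) G i) x = \sum_(i <- r) G i x.
Proof.
elim: r => [|i r IH]; first by rewrite !big_nil.
by rewrite !big_cons dprodD IH.
Qed.

Definition dprod_delta (x : T) (m : M x) : dprod := fun y =>
  match excluded_middle_informative (x = y) with
  | left e => eq_rect x M m y e
  | right _ => 0
  end.

Lemma dprod_deltaE x (m : M x) : dprod_delta m x = m.
Proof.
rewrite /dprod_delta; case: excluded_middle_informative => // e.
by rewrite (proof_irrelevance _ e erefl).
Qed.

Lemma dprod_delta_eq0 x (m : M x) y : y <> x -> dprod_delta m y = 0.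
Proof.
by move=> nyx; rewrite /dprod_delta; case: excluded_middle_informative => // e; case: nyx.
Qed.

End DependentProduct.

Section FModuleFacts.
Variables (k : fieldType) (F : linCat k) (M : fmodule F).

Lemma mact0f x y (m : M x) : mact (0 : hom F x y) m = 0.
Proof. exact: linear_at0 (mact_linf m). Qed.

Lemma mact_expand a y (w : hom F a y) (m : M a) :
  \sum_(i < dimh F a y) (dualb i w : k) *: mact (bas i) m = mact w m.
Proof.
rewrite {2}(hom_expand w) (lin_sum _ _ _ (mact_linf m)).
by apply: eq_bigr => i _; rewrite (lin_scale _ (mact_linf m)).
Qed.

End FModuleFacts.

Section ProductContramodule.
Variables (k : fieldType) (F : linCat k) (cls : obj F -> list (obj F)).
Hypothesis hcls : finite_blocks cls.
Variable M : fmodule F.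

Definition prodM : lmodType k := dprod (fun x => (M x : lmodType k)).

Definition prod_pi (f : linfam F prodM) : prodM := fun y =>
  \sum_(a <- cls y) \sum_(i < dimh F a y) mact (bas i) (sval f a y (dualb i) a).

Lemma prod_pi_lin : pi_linear prod_pi.
Proof.
move=> al f g; apply: functional_extensionality_dep => y.
rewrite /prod_pi dprodD dprodZ scaler_sumr -big_split; apply: eq_bigr => a _.
rewrite scaler_sumr -big_split; apply: eq_bigr => i _ /=.
by rewrite dprodD dprodZ (mact_lin (bas i)).
Qed.

Lemma prod_pi_pt (v : forall a b, hom F a b) (q : prodM) y :
  prod_pi (ptfam v q) y = \sum_(a <- cls y) mact (v a y) (q a).
Proof.
apply: eq_bigr => a _ /=; rewrite -mact_expand; apply: eq_bigr => i _.
by rewrite dprodZ (lin_scale _ (mact_lin (bas i))).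
Qed.

Lemma prod_pi_counit (p : prodM) : prod_pi (ptfam (fun a b => at2 (idm F a) a b) p) = p.
Proof.
apply: functional_extensionality_dep => y; rewrite prod_pi_pt.
rewrite (big_NoDup1 (z0 := y) (cls_NoDup hcls y)).
- by rewrite at2E mact_id.
- by move=> a na; rewrite (at2_eq0r (idm F a) _ na) mact0f.
- by move=> /(_ (cls_self hcls y)).
Qed.

Definition assoc_term (B : bifam F prodM) y b z : M y :=
  \sum_(i < dimh F z y) \sum_(j < dimh F b z)
     mact (bas i) (mact (bas j) (sval B b z z y (dualb j) (dualb i) b)).

Lemma prod_pi_assoc_lhsE (B : bifam F prodM) y :
  prod_pi (assoc_lhs prod_pi_lin B) y =
  \sum_(z <- cls y) \sum_(b <- cls y) assoc_term B y b z.
Proof.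
apply: eq_big_In => z hz; rewrite -(cls_eq hcls hz) /assoc_term.
rewrite exchange_big /=; apply: eq_bigr => i _.
rewrite (lin_sum _ _ _ (mact_lin (bas i))); apply: eq_bigr => b _.
by rewrite (lin_sum _ _ _ (mact_lin (bas i))).
Qed.

Lemma prod_pi_assoc_rhsE (B : bifam F prodM) y :
  prod_pi (assoc_rhs B) y =
  \sum_(b <- cls y) \sum_(z <- zlist b y) assoc_term B y b z.
Proof.
rewrite /prod_pi /=; apply: eq_bigr => b _.
under eq_bigr do rewrite /fmu dprod_sum (lin_sum _ _ _ (mact_lin _)).
rewrite exchange_big /=; apply: eq_bigr => z _.
under eq_bigr do rewrite dprod_sum (lin_sum _ _ _ (mact_lin _)).
rewrite exchange_big /= [RHS]exchange_big /=; apply: eq_bigr => j _.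
under eq_bigr do rewrite dprod_sum (lin_sum _ _ _ (mact_lin _)).
rewrite exchange_big /=; apply: eq_bigr => i _.
under eq_bigr do rewrite dprodZ (lin_scale _ (mact_lin _)).
by rewrite mact_expand mact_comp.
Qed.

Lemma prod_pi_assoc (B : bifam F prodM) :
  prod_pi (assoc_lhs prod_pi_lin B) = prod_pi (assoc_rhs B).
Proof.
apply: functional_extensionality_dep => y.
rewrite prod_pi_assoc_lhsE prod_pi_assoc_rhsE exchange_big /=.
apply: eq_big_In => b hb; have [nd zE] := zlist_spec hcls b y.
symmetry; apply: (big_NoDup_incl nd (cls_NoDup hcls y)).
  by move=> z /zE [_ /(cls_homnz hcls)].
move=> z _ nin; apply: big1 => i _; apply: big1 => j _.
case: (classic (homnz b z)) => hbz; last first.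
  by rewrite (not_homnz_eq0 hbz (bas j)) mact0f (linear_at0 (mact_lin _)).
have hzy : ~ homnz z y by move=> hzy; apply/nin/zE.
by rewrite (not_homnz_eq0 hzy (bas i)) mact0f.
Qed.

Definition prod_contramod : contramod F := Contra prod_pi_counit prod_pi_assoc.

Lemma prod_eact_diag x (q : prod_contramod) : (eact x q : prodM) x = (q : prodM) x.
Proof.
rewrite /eact /dact /= prod_pi_pt (big_NoDup1 (z0 := x) (cls_NoDup hcls x)).
- by rewrite at2E mact_id.
- by move=> a /nesym na; rewrite (at2_eq0l (idm F x) _ na) mact0f.
- by move=> /(_ (cls_self hcls x)).
Qed.

Lemma prod_eact_off x (q : prod_contramod) y : y <> x -> (eact x q : prodM) y = 0.
Proof.
move=> /nesym ny; rewrite /eact /dact /= prod_pi_pt big1 // => a _.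
by rewrite (at2_eq0r (idm F x) _ ny) mact0f.
Qed.

Lemma prod_Theta_iso :
  Theta_iso (M := M) (fun x (p : prod_contramod) => (p : prodM) x).
Proof.
split=> //.
- move=> x _ _ [q1 ->] [q2 ->] e; apply: functional_extensionality_dep => y.
  by case: (classic (y = x)) => [->//|ny]; rewrite !prod_eact_off.
- move=> x m; exists (dprod_delta m : prod_contramod); last exact: dprod_deltaE.
  exists (dprod_delta m : prod_contramod); apply: functional_extensionality_dep => y.
  case: (classic (y = x)) => [->|ny]; first by rewrite prod_eact_diag.
  by rewrite prod_eact_off // dprod_delta_eq0.
- move=> x y f _ [q ->]; rewrite /evact /dact /= prod_pi_pt.
  rewrite (big_NoDup1 (z0 := x) (cls_NoDup hcls y)).
  + by rewrite at2E.
  + by move=> a /nesym na; rewrite (at2_eq0l f _ na) mact0f.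
  + move=> /(not_homnz_cls hcls) hn.
    by rewrite (not_homnz_eq0 hn (at2 f x y)) mact0f.
Qed.

End ProductContramodule.

Theorem finite_blocks_Theta_equivalence (k : fieldType) (F : linCat k)
    (cls : obj F -> list (obj F)) :
  finite_blocks cls -> Theta_equivalence F.
Proof.
move=> hcls; split.
- exact: Theta_faithful hcls.
- move=> P Q eta [eta_in eta_lin eta_nat].
  exists (eta_ext_hom hcls eta_in eta_lin eta_nat).
  by move=> x p /(eta_extE hcls eta_in eta_lin).
- by move=> M; exists (prod_contramod hcls M); eexists; exact: prod_Theta_iso.
Qed.

Section ShortBlocks.
Variables (k : fieldType) (E : linCat k).
Hypothesis lf : locally_finite E.

Lemma short_homnz_simeq (x y : obj E) : homnz (F := short E) x y -> simeq x y.
Proof.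
case=> u nu; apply: NNPP => ns; apply: nu; apply: short_valK.
by rewrite (short_hom0 u ns) linear0.
Qed.

Definition simeq_class (y : obj E) : list (obj E) :=
  epsilon (inhabits nil)
    (fun l => List.NoDup l /\ forall a, List.In a l <-> simeq a y).

Lemma simeq_classP y : List.NoDup (simeq_class y) /\
  forall a, List.In a (simeq_class y) <-> simeq a y.
Proof.
apply: (epsilon_spec (inhabits nil) (fun l => List.NoDup l /\ _)).
have [s hs] := lf y y.
by apply: (NoDup_enum_of_incl (s := s)) => z [yz zy]; exact: hs.
Qed.

Lemma short_finite_blocks : finite_blocks (F := short E) simeq_class.
Proof.
split.
- by move=> y; case: (simeq_classP y).
- by move=> y; apply/(proj2 (simeq_classP y))/simeq_refl.
- by move=> a y /short_homnz_simeq /(proj2 (simeq_classP y)).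
- move=> y z /(proj2 (simeq_classP y)) [zy yz]; rewrite /simeq_class; congr epsilon.
  have classE (a : obj E) : simeq a z <-> simeq a y.
    by split=> h; apply: simeq_trans h _; split.
  apply: functional_extensionality => l; apply: propositional_extensionality.
  by split=> -[nd lE]; split=> // a; rewrite lE classE.
Qed.

End ShortBlocks.

Theorem lemma3p5 (k : fieldType) (E : linCat k) :
  locally_finite E ->
  [/\ (forall (P Q : contramod (short E)) (g1 g2 : contra_hom P Q),
         (forall x (p : P), inTheta x p -> g1 p = g2 p) ->
         forall p : P, g1 p = g2 p),
      (forall (P Q : contramod (short E)) (eta : forall x : obj (short E), P -> Q),
         Theta_hom eta ->
         exists g : contra_hom P Q,
           forall x (p : P), inTheta x p -> g p = eta x p)
    & (forall M : fmodule (short E),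
         exists (P : contramod (short E)) (phi : forall x : obj (short E), P -> M x),
           Theta_iso phi)].
Proof.
move=> lf; exact: finite_blocks_Theta_equivalence (short_finite_blocks lf).
Qed.
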